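(* Let $U$ be a finite-dimensional complex vector space with basis $\mathbb B$, $w:U\to U$ linear, and $A=[w]_{(\mathbb B,\preceq)}$ the matrix of $w$ with respect to an arbitrary total ordering $\preceq$ of $\mathbb B$. Then $w$ acts on $(U,\mathbb B)$ by some bijection up to lower-order terms if and only if there exist permutation matrices $P_1,P_2$ such that $P_1AP_2$ is an upper-triangular integer matrix whose diagonal entries are all $\pm1$.
   Context: $w$ acts on $(U,\mathbb B)$ by some bijection up to lower-order terms if there exist a bijection $\xi:\mathbb B\to\mathbb B$ and a preorder $\le$ on $\mathbb B$ such that for every $x\in\mathbb B$ there are integers $a_y$ with $w(x)=\pm\xi(x)+\sum_{y<x}a_y\xi(y)$, the sign depending only on the equivalence class of $x$ under the equivalence relation induced by $\le$. *)

From HB Require Import structures.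
From mathcomp Require Import all_boot all_order all_algebra all_fingroup.
From mathcomp Require Import complex.
From mathcomp Require Import reals.
Set Implicit Arguments. Unset Strict Implicit. Unset Printing Implicit Defensive.
Import Order.TTheory GRing.Theory Num.Theory.
Local Open Scope ring_scope.

(* Matrix of w w.r.t. the basis b, the basis vectors being totally ordered
   by their position in the tuple b; column j holds the coordinates of
   w (b_j). *)
Definition basis_mx (R : realType) (U : vectType R[i]) (n : nat)
  (b : n.-tuple U) (w : 'End(U)) : 'M[R[i]]_n :=
  \matrix_(i < n, j < n) coord b i (w (tnth b j)).

Definition strict_of (T : Type) (le : rel T) : rel T :=
  fun y x => le y x && ~~ le x y.

Definition acts_by_bij_lot (R : realType) (U : vectType R[i]) (n : nat)
  (b : n.-tuple U) (w : 'End(U)) : Prop :=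
  exists (xi : {perm 'I_n}) (le : rel 'I_n),
    [/\ reflexive le, transitive le &
      exists sg : 'I_n -> bool,
        (forall x y, le x y -> le y x -> sg x = sg y) /\
        forall x : 'I_n, exists a : 'I_n -> int,
          w (tnth b x) = (-1) ^+ sg x *: tnth b (xi x)
            + \sum_(y | strict_of le y x) (a y)%:~R *: tnth b (xi y)].

Definition upper_tri_int_pm1 (n : nat) (M : 'M[int]_n) : Prop :=
  (forall i j : 'I_n, (j < i)%N -> M i j = 0) /\
  (forall i : 'I_n, M i i = 1 \/ M i i = -1).

From HB Require Import structures.
From mathcomp Require Import all_boot all_order all_algebra all_fingroup.
From mathcomp Require Import complex.
From mathcomp Require Import reals.
Import Order.TTheory GRing.Theory Num.Theory.
Local Open Scope ring_scope.

(* Reading off coordinates, w acts by a bijection xi up to lower-order terms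
   iff the matrix of w with its rows renamed along xi is an integer matrix with
   diagonal entries +-1 whose other nonzero entries (y, x) all have y strictly
   below x for the preorder.  Renumbering the basis along a linear extension of
   the strict part of the preorder makes this matrix upper triangular, which
   yields P1 and P2.  Conversely P2 induces a total order on the basis and P1 P2
   the bijection; as this order is antisymmetric, the sign condition on its
   equivalence classes is automatic. *)

Lemma card_strict_pred_homo {T : finType} {st : rel T} :
  irreflexive st -> transitive st ->
  {homo (fun x => #|[set y | st y x]|) : y x / st y x >-> (y < x)%N}.
Proof.
move=> st_irr st_tr y x st_yx; apply: proper_card; apply/properP; split.
  by apply/subsetP => z; rewrite !inE => st_zy; apply: st_tr st_zy st_yx.
by exists y; rewrite !inE ?st_yx ?st_irr.
Qed.

Lemma rank_perm {n : nat} {f : 'I_n -> nat} :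
  injective f -> exists rho : 'S_n, forall x y, (f y < f x)%N -> (rho y < rho x)%N.
Proof.
move=> f_inj; pose r x := #|[set y | (f y < f x)%N]|.
have r_mono : {homo r : y x / (f y < f x)%N >-> (y < x)%N}.
  by apply: card_strict_pred_homo => [x|x y z]; [exact: ltnn | exact: ltn_trans].
have r_lt_n x : (r x < n)%N.
  by rewrite -[n]card_ord -cardsT; apply/proper_card/properP; split;
    [exact: subsetT | exists x; rewrite !inE ?ltnn].
have r_inj : injective (fun x => Ordinal (r_lt_n x)).
  move=> x y /(congr1 val) /= rxy; apply: f_inj.
  by case: (ltngtP (f x) (f y)) => // /r_mono; rewrite rxy ltnn.
by exists (perm r_inj) => x y /r_mono; rewrite !permE.
Qed.

Lemma linear_extension {n : nat} {st : rel 'I_n} :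
  irreflexive st -> transitive st ->
  exists rho : 'S_n, forall x y, st y x -> (rho y < rho x)%N.
Proof.
move=> st_irr st_tr; pose depth x := #|[set y | st y x]|.
have depth_mono := card_strict_pred_homo st_irr st_tr.
(* Index [x] breaks ties between elements of equal depth. *)
pose key (x : 'I_n) := (depth x * n + x)%N.
have key_inj : injective key.
  move=> x y /(congr1 (modn^~ n)); rewrite /key !modnMDl !modn_small //.
  by move/val_inj.
have [rho rho_mono] := rank_perm key_inj.
exists rho => x y /depth_mono lt_depth; apply: rho_mono.
rewrite /key (@leq_trans (depth y * n + n)) ?ltn_add2l // -mulSnr.
exact: leq_trans (leq_mul lt_depth (leqnn n)) (leq_addr _ _).
Qed.

Lemma strict_of_irr {T : Type} (le : rel T) : irreflexive (strict_of le).
Proof. by move=> x; rewrite /strict_of andbN. Qed.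

Lemma strict_of_trans {T : Type} {le : rel T} :
  transitive le -> transitive (strict_of le).
Proof.
move=> le_tr y x z /andP[le_xy nle_yx] /andP[le_yz nle_zy].
rewrite /strict_of (le_tr _ _ _ le_xy le_yz); apply: contra nle_yx => le_zx.
exact: le_tr le_zx.
Qed.

Lemma perm_mx_mulmx_perm_mx {R : pzRingType} {m n : nat} (s1 : 'S_m) (s2 : 'S_n)
    (A : 'M[R]_(m, n)) :
  perm_mx s1 *m A *m perm_mx s2 = col_perm s2^-1 (row_perm s1 A).
Proof. by rewrite col_permE invgK row_permE. Qed.

Section PreorderTriangular.
Context {n : nat}.

Definition le_tri_int_pm1 (le : rel 'I_n) (N : 'M[int]_n) : Prop :=
  [/\ forall y x, y != x -> ~~ strict_of le y x -> N y x = 0,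
      forall x, N x x = 1 \/ N x x = -1 &
      forall x y, le x y -> le y x -> N x x = N y y].

Lemma le_tri_int_pm1_relabel (p : 'S_n) {le : rel 'I_n} {N : 'M[int]_n} :
  le_tri_int_pm1 le N ->
  le_tri_int_pm1 (fun i j => le (p i) (p j)) (row_perm p (col_perm p N)).
Proof.
case=> N_tri N_diag N_cons; split=> [i j ij|i|i j le_ij le_ji]; rewrite !mxE.
- by apply: N_tri; rewrite (inj_eq perm_inj).
- exact: N_diag.
- exact: N_cons.
Qed.

Lemma strict_of_leq :
  strict_of (fun i j : 'I_n => (i <= j)%N) =2 (fun i j => (i < j)%N).
Proof. by move=> i j; rewrite /strict_of -ltnNge andb_idl // => /ltnW. Qed.

Lemma le_tri_int_pm1_of_upper_tri {M : 'M[int]_n} :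
  upper_tri_int_pm1 M -> le_tri_int_pm1 (fun i j => (i <= j)%N) M.
Proof.
case=> M_up M_diag; split=> // [i j ij|i j le_ij le_ji].
  rewrite strict_of_leq -leqNgt => le_ji; apply: M_up.
  by rewrite ltn_neqAle le_ji andbT eq_sym.
by congr (M _ _); apply/val_inj/anti_leq/andP.
Qed.

Lemma upper_tri_int_pm1_of_le_tri {le : rel 'I_n} {N : 'M[int]_n} :
  (forall x y, strict_of le y x -> (y < x)%N) ->
  le_tri_int_pm1 le N -> upper_tri_int_pm1 N.
Proof.
move=> lt_of_strict [N_tri N_diag _]; split=> // i j lt_ji.
apply: N_tri; first by rewrite neq_ltn lt_ji orbT.
by apply/negP => /lt_of_strict; rewrite ltnNge ltnW.
Qed.

End PreorderTriangular.

Lemma permuted_upper_tri_int_pm1P {R : pzRingType} {n : nat} (A : 'M[R]_n) :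
  (exists (xi : 'S_n) (le : rel 'I_n) (N : 'M[int]_n),
     [/\ reflexive le, transitive le, row_perm xi A = map_mx intr N
       & le_tri_int_pm1 le N]) <->
  exists (s1 s2 : 'S_n) (M : 'M[int]_n),
    perm_mx s1 *m A *m perm_mx s2 = map_mx intr M /\ upper_tri_int_pm1 M.
Proof.
split=> [[xi [le [N [_ le_tr eN N_tri]]]] | [s1 [s2 [M [eM M_up]]]]].
  have [rho rho_mono] := linear_extension (strict_of_irr le) (strict_of_trans le_tr).
  exists (rho^-1 * xi)%g, rho, (row_perm rho^-1 (col_perm rho^-1 N)); split.
    rewrite perm_mx_mulmx_perm_mx row_permM eN map_row_perm map_col_perm.
    exact: col_row_permC.
  apply: upper_tri_int_pm1_of_le_tri (le_tri_int_pm1_relabel rho^-1 N_tri).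
  by move=> i j /rho_mono; rewrite !permKV.
exists (s2 * s1)%g, (fun i j => (s2 i <= s2 j)%N), (row_perm s2 (col_perm s2 M)).
split=> [i | i j k | | ].
- exact: leqnn.
- exact: leq_trans.
- have eA : row_perm s1 A = col_perm s2 (map_mx intr M).
    by rewrite -eM perm_mx_mulmx_perm_mx -col_permM mulgV col_perm1.
  by rewrite row_permM eA map_row_perm map_col_perm.
- exact: le_tri_int_pm1_relabel (le_tri_int_pm1_of_upper_tri M_up).
Qed.

Section PermutedBasisExpansion.
Context {K : fieldType} {U : vectType K} {n : nat} {b : n.-tuple U}.
Hypothesis b_basis : basis_of fullv b.

Lemma coord_perm_expansionP (xi : 'S_n) (v : U) (c : 'I_n -> K) :
  v = \sum_y c y *: tnth b (xi y) <-> forall y, coord b (xi y) v = c y.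
Proof.
have -> : \sum_y c y *: tnth b (xi y) = \sum_k c (xi^-1 k)%g *: b`_k.
  rewrite [RHS](reindex_inj (@perm_inj _ xi)) /=.
  by apply: eq_bigr => y _; rewrite permK (tnth_nth 0).
split=> [-> y | coord_v].
  by rewrite coord_sum_free ?(basis_free b_basis) // permK.
rewrite {1}(coord_basis b_basis (memvf v)); apply: eq_bigr => k _.
by rewrite -coord_v permKV.
Qed.

End PermutedBasisExpansion.

Section ActsByBijection.
Context {R : realType} {U : vectType R[i]} {n : nat} {b : n.-tuple U}.
Hypothesis b_basis : basis_of fullv b.
Variable w : 'End(U).

Lemma lot_columnP {xi : 'S_n} {st : rel 'I_n} {x : 'I_n} {s : R[i]}
    {a : 'I_n -> R[i]} :
  irreflexive st ->
  w (tnth b x) = s *: tnth b (xi x) + \sum_(y | st y x) a y *: tnth b (xi y) <->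
  forall y, basis_mx b w (xi y) x = if y == x then s else if st y x then a y else 0.
Proof.
move=> st_irr.
have -> : s *: tnth b (xi x) + \sum_(y | st y x) a y *: tnth b (xi y) =
    \sum_y (if y == x then s else if st y x then a y else 0) *: tnth b (xi y).
  rewrite [RHS](bigD1 x) //= eqxx; congr (_ + _).
  rewrite big_mkcond [RHS]big_mkcond; apply: eq_bigr => y _.
  by case: eqVneq => [->|_]; rewrite ?st_irr //=; case: ifP; rewrite ?scale0r.
rewrite coord_perm_expansionP //.
by split=> col_x y; rewrite -col_x mxE.
Qed.

Lemma acts_by_bij_lotP :
  acts_by_bij_lot b w <->
  exists (xi : 'S_n) (le : rel 'I_n) (N : 'M[int]_n),
    [/\ reflexive le, transitive le, row_perm xi (basis_mx b w) = map_mx intr N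
      & le_tri_int_pm1 le N].
Proof.
split=> [[xi [le [le_refl le_tr [sg [sg_cons col]]]]] |
         [xi [le [N [le_refl le_tr eN [N_tri N_diag N_cons]]]]]].
  have [a col_a] := fin_all_exists col.
  exists xi, le, (\matrix_(y, x) if y == x then (-1) ^+ sg x
                               else if strict_of le y x then a x y else 0).
  split=> //.
    apply/matrixP => y x.
    have /(lot_columnP (strict_of_irr le)) col_x := col_a x.
    rewrite [LHS]mxE col_x !mxE.
    by rewrite !(fun_if intr) rmorphXn rmorphN1.
  split=> [y x yx nst | x | x y le_xy le_yx]; rewrite !mxE ?eqxx.
  - by rewrite (negbTE yx) (negbTE nst).
  - by case: (sg x); [right | left].
  - by rewrite (sg_cons _ _ le_xy le_yx).
exists xi, le; split=> //; exists (fun x => N x x == -1); split.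
  by move=> x y le_xy le_yx; rewrite (N_cons _ _ le_xy le_yx).
move=> x; exists (fun y => N y x); apply/(lot_columnP (strict_of_irr le)) => y.
have := congr1 (fun B : 'M_n => B y x) eN; rewrite !mxE => ->.
case: eqVneq => [->|yx]; first by case: (N_diag x) => ->.
by case: ifP => // nst; rewrite N_tri ?nst.
Qed.

End ActsByBijection.

Theorem corollaryA3 (R : realType) (U : vectType R[i]) (n : nat)
  (b : n.-tuple U) (hb : basis_of fullv b) (w : 'End(U)) :
  acts_by_bij_lot b w <->
  exists (s1 s2 : 'S_n) (M : 'M[int]_n),
    perm_mx s1 *m basis_mx b w *m perm_mx s2 = map_mx intr M /\
    upper_tri_int_pm1 M.
Proof. exact: iff_trans (acts_by_bij_lotP hb w) (permuted_upper_tri_int_pm1P _). Qed.
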